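(* Let $R\subseteq\mathbb N$ be sparse and let $A,B$ be operators on $R$ with $A\neq_R 0$. Then there is $\Delta_0\in\mathbb N$ such that for all $\Delta\ge\Delta_0$ and all $z\in R$, $|A(\sigma^\Delta z)|>B z$.
   Context: Let $R\subseteq\mathbb N$ be infinite, enumerated increasingly as $(r_n)_{n\in\mathbb N}$; $\sigma:R\to R$ is the successor map $\sigma(r_n)=r_{n+1}$ and $\sigma^k$ its $k$-fold iterate ($\sigma^0=\mathrm{id}$). An operator on $R$ is a function $R\to\mathbb Z$, $z\mapsto a_m\sigma^m(z)+\dots+a_0\sigma^0(z)$ with $a_i\in\mathbb Z$. For an operator $A$: $A=_R0$ if $Az=0$ for all $z\in R$; $A>_R0$ (resp. $A<_R0$) if $Az>0$ (resp. $Az<0$) for all but finitely many $z\in R$; $A\ne_R0$ means not $A=_R0$. $R$ is sparse if every operator $A$ satisfies (S1) $A=_R0$ or $A>_R0$ or $A<_R0$; and (S2) if $A>_R0$ then there is $\Delta\in\mathbb N$ with $A(\sigma^\Delta z)>z$ for all $z\in R$. *)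

From Stdlib Require Import ZArith List Lia.
Import ListNotations.
Open Scope Z_scope.

(* An infinite set R ⊆ ℕ is represented by its increasing enumeration
   r : nat -> nat (r n = r_n), required to be strictly increasing.
   The element z = r_n ∈ R is referred to by its index n, and
   σ^k(r_n) = r_(n+k). *)
Definition strictly_increasing (r : nat -> nat) : Prop :=
  forall m n : nat, (m < n)%nat -> (r m < r n)%nat.

(* An operator z ↦ a_m σ^m z + ... + a_0 σ^0 z is given by its list of
   coefficients [a_0; a_1; ...; a_m].  [op_at r a n] is its value at
   z = r_n, i.e. Σ_i a_i * r_(n+i). *)
Fixpoint op_at (r : nat -> nat) (a : list Z) (n : nat) : Z :=
  match a with
  | [] => 0
  | c :: a' => c * Z.of_nat (r n) + op_at r a' (S n)
  end.

Definition op_eq0 (r : nat -> nat) (a : list Z) : Prop :=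
  forall n : nat, op_at r a n = 0.

Definition op_pos (r : nat -> nat) (a : list Z) : Prop :=
  exists N : nat, forall n : nat, (N <= n)%nat -> op_at r a n > 0.

Definition op_neg (r : nat -> nat) (a : list Z) : Prop :=
  exists N : nat, forall n : nat, (N <= n)%nat -> op_at r a n < 0.

Definition sparse (r : nat -> nat) : Prop :=
  (forall a : list Z, op_eq0 r a \/ op_pos r a \/ op_neg r a) /\
  (forall a : list Z, op_pos r a ->
     exists D : nat, forall n : nat, op_at r a (n + D)%nat > Z.of_nat (r n)).

(* Sparseness (S2) applied to the positive operator σ - id shows that a fixed
   shift at least doubles every element of R; iterating it, some fixed shift
   σ^F multiplies elements by any prescribed factor, e.g. by |B|₁.  With
   b the length of the coefficient list of B, B z ≤ |B|₁ σ^b z.  By (S1) the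
   operator A ≠_R 0 is eventually of one sign, positive after replacing A by
   -A, so (S2) gives a shift Δ' with A(σ^Δ' w) > w.  Taking w = σ^F σ^b σ^j z
   gives A(σ^(Δ'+F+b+j) z) > |B|₁ σ^b z ≥ B z for every j. *)

From Stdlib Require Import ZArith List Lia.
Import ListNotations.
Open Scope Z_scope.

Fixpoint l1_norm (b : list Z) : Z :=
  match b with [] => 0 | c :: b' => Z.abs c + l1_norm b' end.

Lemma l1_norm_nonneg (b : list Z) : 0 <= l1_norm b.
Proof. induction b; simpl; lia. Qed.

Lemma op_at_map_opp (r : nat -> nat) (a : list Z) (n : nat) :
  op_at r (map Z.opp a) n = - op_at r a n.
Proof. revert n; induction a as [|c a IH]; intros n; simpl; [|rewrite IH]; lia. Qed.

Lemma op_neg_op_pos_opp (r : nat -> nat) (a : list Z) :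
  op_neg r a -> op_pos r (map Z.opp a).
Proof.
  intros [N HN]; exists N; intros n Hn.
  rewrite op_at_map_opp; specialize (HN n Hn); lia.
Qed.

Section Enumeration.

Variable r : nat -> nat.
Hypothesis r_incr : strictly_increasing r.

Lemma strictly_increasing_le (i j : nat) : (i <= j)%nat -> (r i <= r j)%nat.
Proof.
  intros Hij; destruct (Nat.eq_dec i j) as [->|Hne]; [lia|].
  apply Nat.lt_le_incl, r_incr; lia.
Qed.

Lemma op_at_le_l1_norm (b : list Z) (n : nat) :
  op_at r b n <= l1_norm b * Z.of_nat (r (n + length b)%nat).
Proof.
  revert n; induction b as [|c b IH]; intros n; simpl; [lia|].
  specialize (IH (S n)).
  replace (S n + length b)%nat with (n + S (length b))%nat in IH by lia.
  pose proof (l1_norm_nonneg b).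
  pose proof (strictly_increasing_le n (n + S (length b)) ltac:(lia)).
  set (x := Z.of_nat (r n)) in *.
  set (y := Z.of_nat (r (n + S (length b))%nat)) in *.
  assert (0 <= x <= y) by (unfold x, y; lia).
  assert (c * x <= Z.abs c * y) by (destruct (Z.abs_spec c) as [[? ->]|[? ->]]; nia).
  nia.
Qed.

Hypothesis r_sparse : sparse r.

Lemma sparse_shift_double :
  exists E : nat, forall n : nat, Z.of_nat (r (n + E)%nat) >= 2 * Z.of_nat (r n).
Proof.
  destruct r_sparse as [_ S2].
  assert (succ_sub_pos : op_pos r [-1; 1]).
  { exists 0%nat; intros n _; cbn [op_at].
    specialize (r_incr n (S n) ltac:(lia)); lia. }
  destruct (S2 _ succ_sub_pos) as [D HD].
  exists (S D); intros n; specialize (HD n); cbn [op_at] in HD.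
  pose proof (strictly_increasing_le n (n + D) ltac:(lia)).
  replace (n + S D)%nat with (S (n + D)) by lia; lia.
Qed.

Lemma sparse_shift_ge_mul (k : nat) :
  exists F : nat, forall n : nat,
    Z.of_nat (r (n + F)%nat) >= Z.of_nat k * Z.of_nat (r n).
Proof.
  destruct sparse_shift_double as [E HE].
  induction k as [|[|k] [F HF]].
  - exists 0%nat; intros n; lia.
  - exists 0%nat; intros n; rewrite Nat.add_0_r; lia.
  - exists (F + E)%nat; intros n.
    specialize (HF n); specialize (HE (n + F)%nat).
    rewrite Nat.add_assoc; nia.
Qed.

Lemma op_pos_shift_dominates (a B : list Z) :
  op_pos r a ->
  exists D0 : nat, forall D n : nat, (D0 <= D)%nat ->
    op_at r a (n + D)%nat > op_at r B n.
Proof.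
  intros a_pos.
  destruct (proj2 r_sparse a a_pos) as [Da HDa].
  destruct (sparse_shift_ge_mul (Z.to_nat (l1_norm B))) as [F HF].
  exists (length B + F + Da)%nat; intros D n HD.
  set (m := (n + (D - (length B + F + Da)) + length B)%nat).
  replace (n + D)%nat with (m + F + Da)%nat by (unfold m; lia).
  pose proof (op_at_le_l1_norm B n) as B_bound.
  pose proof (strictly_increasing_le (n + length B) m ltac:(unfold m; lia)) as m_ge.
  specialize (HF m); specialize (HDa (m + F)%nat).
  pose proof (l1_norm_nonneg B).
  rewrite Z2Nat.id in HF by lia; nia.
Qed.

End Enumeration.

Theorem mainTheorem3 (r : nat -> nat) (A B : list Z) :
  strictly_increasing r ->
  sparse r ->
  ~ op_eq0 r A ->
  exists D0 : nat, forall (D n : nat), (D0 <= D)%nat ->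
    Z.abs (op_at r A (n + D)%nat) > op_at r B n.
Proof.
  intros r_incr r_sparse A_ne0.
  destruct (proj1 r_sparse A) as [A_eq0|[A_pos|A_neg]]; [contradiction| |].
  - destruct (op_pos_shift_dominates r r_incr r_sparse A B A_pos) as [D0 HD0].
    exists D0; intros D n HD; specialize (HD0 D n HD); lia.
  - destruct (op_pos_shift_dominates r r_incr r_sparse _ B
                (op_neg_op_pos_opp r A A_neg)) as [D0 HD0].
    exists D0; intros D n HD; specialize (HD0 D n HD).
    rewrite op_at_map_opp in HD0; lia.
Qed.
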